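(* For every integer $n\ge 2$, \[ \gamma_{2t}(K_n\Box K_{n+1})=\begin{cases}(3n+2)/2, & n\equiv 0\pmod 2,\\ (3n+3)/2, & n\equiv 1\pmod 2.\end{cases} \]
   Context: For a graph $G=(V,E)$, a set $S\subseteq V$ is a total $2$-dominating set if every vertex of $V$ (including those in $S$) is adjacent to at least $2$ vertices of $S$; $\gamma_{2t}(G)$ is the minimum cardinality of such a set. $G\Box H$ denotes the Cartesian product: vertex set $V(G)\times V(H)$, with $(u_1,v_1)\sim(u_2,v_2)$ iff either $u_1=u_2$ and $v_1\sim v_2$, or $v_1=v_2$ and $u_1\sim u_2$. $K_n$ is the complete graph on $n$ vertices. *)

From mathcomp Require Import all_boot all_order.
Set Implicit Arguments. Unset Strict Implicit. Unset Printing Implicit Defensive.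

Definition complete_rel (n : nat) : rel 'I_n := fun x y => x != y.

Definition cart_rel (T U : finType) (eG : rel T) (eH : rel U) : rel (T * U) :=
  fun p q => ((p.1 == q.1) && eH p.2 q.2) || ((p.2 == q.2) && eG p.1 q.1).

Definition total2dom (T : finType) (e : rel T) (S : {set T}) : bool :=
  [forall x, 2 <= #|[set y in S | e x y]|].

(* gamma_{2t}: minimum cardinality of a total 2-dominating set
   (default #|T|.+1 if none exists) *)
Definition gamma2t (T : finType) (e : rel T) : nat :=
  \big[minn/#|T|.+1]_(S : {set T} | total2dom e S) #|S|.

From mathcomp Require Import all_boot all_order all_algebra.
From mathcomp Require Import lra zify.
Set Implicit Arguments. Unset Strict Implicit. Unset Printing Implicit Defensive.
Import Order.TTheory GRing.Theory Num.Theory.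

(* Let S be total 2-dominating in the rook's graph K_p x K_q, and let r_i and
   c_j be the numbers of points of S in row i and column j.  Domination at
   (i, j) reads r_i + c_j >= 2 + 2 [(i, j) \in S].  If a row is empty, every
   column holds two points of S, so |S| >= 2q; symmetrically |S| >= 2p if a
   column is empty.  Otherwise every point of S has r_i, c_j >= 1 and
   r_i + c_j >= 4, hence 1/r_i + 1/c_j <= 4/3, and summing over S gives
   p + q <= 4|S|/3.  For p = n and q = n + 1 each bound gives
   |S| >= floor((3n + 3)/2).

   Conversely, a set meeting every row and every column in which every point has
   two neighbours is total 2-dominating.  A column star and a row star of three
   points each cover four rows and four columns with six points; adding such a
   block gives the recursion from n to n + 4, starting from explicit sets for
   n = 3, ..., 6, while for n = 2 the 2 x 2 square works. *)

Notation rook_rel T U := (cart_rel (fun x y : T => x != y) (fun x y : U => x != y)).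

Lemma gamma2t_le_card (T : finType) (e : rel T) (S : {set T}) :
  total2dom e S -> gamma2t e <= #|S|.
Proof. by move=> domS; rewrite /gamma2t -minEnat -leEnat; exact: bigmin_le_cond. Qed.

Lemma leq_gamma2t (T : finType) (e : rel T) (m : nat) :
  m <= #|T|.+1 -> (forall S : {set T}, total2dom e S -> m <= #|S|) ->
  m <= gamma2t e.
Proof. by move=> leT leS; rewrite /gamma2t -minEnat -leEnat; exact: le_bigmin. Qed.

Lemma inv_nat_add_le (r c : nat) : 0 < r -> 0 < c -> 4 <= r + c ->
  (r%:R^-1 + c%:R^-1 <= 4 / 3 :> rat)%R.
Proof.
move=> r_gt0 c_gt0 rc_ge4.
have rc_le : 3 * (r + c) <= 4 * (r * c) by nia.
have r_gt0' : (0 < r%:R :> rat)%R by rewrite ltr0n.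
have c_gt0' : (0 < c%:R :> rat)%R by rewrite ltr0n.
rewrite -(ler_pM2r (mulr_gt0 r_gt0' c_gt0')) mulrDl mulrA mulVf ?gt_eqF // mul1r.
rewrite mulrCA mulVf ?gt_eqF // mulr1.
by move: rc_le; rewrite -(ler_nat rat) !natrM natrD; lra.
Qed.

Section LowerBound.
Variables (T U : finType) (S : {set T * U}).

Definition row_set i := [set j | (i, j) \in S].
Definition col_set j := [set i | (i, j) \in S].

Lemma card_rook_nbrs i j :
  #|[set y in S | rook_rel T U (i, j) y]| <= #|row_set i :\ j| + #|col_set j :\ i|.
Proof.
have sub : [set y in S | rook_rel T U (i, j) y] \subset
    (pair i) @: (row_set i :\ j) :|: (pair^~ j) @: (col_set j :\ i).
  apply/subsetP => -[a b]; rewrite !inE /cart_rel /=.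
  case/andP => abS /orP[] /andP[/eqP eq_ia ne]; rewrite -eq_ia in abS *.
    by apply/orP; left; apply/imsetP; exists b; rewrite // !inE eq_sym ne.
  by apply/orP; right; apply/imsetP; exists a; rewrite // !inE eq_sym ne.
apply: leq_trans (subset_leq_card sub) (leq_trans (leq_card_setU _ _) _).
by apply: leq_add; apply: leq_imset_card.
Qed.

Lemma big_by_rows (R : Type) (idx : R) (op : Monoid.com_law idx) (F : T * U -> R) :
  \big[op/idx]_(s in S) F s = \big[op/idx]_i \big[op/idx]_(j in row_set i) F (i, j).
Proof. by rewrite pair_big_dep /=; apply: eq_big => -[i j] //; rewrite inE. Qed.

Lemma big_by_cols (R : Type) (idx : R) (op : Monoid.com_law idx) (F : T * U -> R) :
  \big[op/idx]_(s in S) F s = \big[op/idx]_j \big[op/idx]_(i in col_set j) F (i, j).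
Proof.
rewrite big_by_rows (exchange_big_dep predT) //=.
by apply: eq_bigr => j _; apply: eq_bigl => i; rewrite !inE.
Qed.

Lemma card_by_rows : #|S| = \sum_i #|row_set i|.
Proof. by rewrite -sum1_card big_by_rows; apply: eq_bigr => i _; rewrite sum1_card. Qed.

Lemma card_by_cols : #|S| = \sum_j #|col_set j|.
Proof. by rewrite -sum1_card big_by_cols; apply: eq_bigr => j _; rewrite sum1_card. Qed.

Hypothesis domS : total2dom (rook_rel T U) S.

Lemma row_col_card_ge i j : 2 + 2 * ((i, j) \in S) <= #|row_set i| + #|col_set j|.
Proof.
move/forallP: domS => /(_ (i, j)) /leq_trans /(_ (card_rook_nbrs i j)).
rewrite (cardsD1 j (row_set i)) (cardsD1 i (col_set j)) !inE.
by case: ((i, j) \in S) => /=; lia.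
Qed.

Lemma empty_row_card_ge i : #|row_set i| = 0 -> 2 * #|U| <= #|S|.
Proof.
move=> row0; rewrite card_by_cols mulnC -sum_nat_const; apply: leq_sum => j _.
by have := row_col_card_ge i j; rewrite row0; lia.
Qed.

Lemma empty_col_card_ge j : #|col_set j| = 0 -> 2 * #|T| <= #|S|.
Proof.
move=> col0; rewrite card_by_rows mulnC -sum_nat_const; apply: leq_sum => i _.
by have := row_col_card_ge i j; rewrite col0; lia.
Qed.

Local Open Scope ring_scope.

Lemma sum_inv_rows : (forall i, 0 < #|row_set i|)%N ->
  \sum_(s in S) #|row_set s.1|%:R^-1 = #|T|%:R :> rat.
Proof.
move=> rows_pos; rewrite big_by_rows /= -[#|T|%:R]sumr_const.
by apply: eq_bigr => i _; rewrite sumr_const -[LHS]mulr_natr mulVf ?pnatr_eq0 -?lt0n.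
Qed.

Lemma sum_inv_cols : (forall j, 0 < #|col_set j|)%N ->
  \sum_(s in S) #|col_set s.2|%:R^-1 = #|U|%:R :> rat.
Proof.
move=> cols_pos; rewrite big_by_cols /= -[#|U|%:R]sumr_const.
by apply: eq_bigr => j _; rewrite sumr_const -[LHS]mulr_natr mulVf ?pnatr_eq0 -?lt0n.
Qed.

Lemma rook_total2dom_card_ge :
  [\/ 2 * #|U| <= #|S|, 2 * #|T| <= #|S| | 3 * (#|T| + #|U|) <= 4 * #|S|]%N.
Proof.
have [i /eqP row0 | rows_pos] := pickP (fun i => #|row_set i| == 0%N).
  exact/Or31/(empty_row_card_ge row0).
have [j /eqP col0 | cols_pos] := pickP (fun j => #|col_set j| == 0%N).
  exact/Or32/(empty_col_card_ge col0).
apply: Or33.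
have {}rows_pos i : (0 < #|row_set i|)%N by rewrite lt0n rows_pos.
have {}cols_pos j : (0 < #|col_set j|)%N by rewrite lt0n cols_pos.
have : (#|T| + #|U|)%:R <= 4 / 3 * #|S|%:R :> rat.
  rewrite natrD -sum_inv_rows // -sum_inv_cols // -big_split /= mulr_natr -sumr_const.
  apply: ler_sum => -[i j] ijS; apply: inv_nat_add_le => //.
  by have := row_col_card_ge i j; rewrite ijS.
by rewrite -(ler_nat rat) !natrM natrD; lra.
Qed.

End LowerBound.

(* For the construction, sets of vertices are lists of (row, column) pairs of
   naturals, so that the base cases are decided by computation. *)
Definition grid_adj (x y : nat * nat) : bool :=
  ((x.1 == y.1) && (x.2 != y.2)) || ((x.2 == y.2) && (x.1 != y.1)).

Definition in_grid (m n : nat) (s : seq (nat * nat)) : bool :=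
  all (fun x => (x.1 < m) && (x.2 < n)) s.

Definition grid_dom (m n : nat) (s : seq (nat * nat)) : bool :=
  all (fun a => all (fun b => 2 <= count (grid_adj (a, b)) s) (iota 0 n)) (iota 0 m).

Definition coord (m n : nat) (x : 'I_m * 'I_n) : nat * nat := (val x.1, val x.2).

Definition grid_set (m n : nat) (s : seq (nat * nat)) : {set 'I_m * 'I_n} :=
  [set x | coord x \in s].

Lemma coord_inj m n : injective (@coord m n).
Proof. by move=> [a b] [c d] [/val_inj -> /val_inj ->]. Qed.

Lemma rook_rel_coord m n (x y : 'I_m * 'I_n) :
  rook_rel 'I_m 'I_n x y = grid_adj (coord x) (coord y).
Proof. by rewrite /cart_rel /grid_adj /= !val_eqE. Qed.

Lemma card_grid_set m n s : #|grid_set m n s| <= size s.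
Proof.
rewrite cardE -(size_map (@coord m n)); apply: uniq_leq_size.
  by rewrite (map_inj_uniq (@coord_inj m n)) enum_uniq.
by move=> _ /mapP[x + ->]; rewrite mem_enum inE.
Qed.

Lemma total2dom_grid_set m n s : uniq s -> in_grid m n s -> grid_dom m n s ->
  total2dom (rook_rel 'I_m 'I_n) (grid_set m n s).
Proof.
move=> uniq_s /allP grid_s /allP dom_s; apply/forallP => x.
have x1 : val x.1 \in iota 0 m by rewrite mem_iota ltn_ord.
have x2 : val x.2 \in iota 0 n by rewrite mem_iota ltn_ord.
apply: leq_trans (allP (dom_s _ x1) _ x2) _.
rewrite -size_filter cardE -(size_map (@coord m n)); apply: uniq_leq_size.
  exact: filter_uniq.
case=> a b; rewrite mem_filter => /andP[adj_ab ab_s].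
have /andP[am bn] := grid_s _ ab_s.
apply/mapP; exists (Ordinal am, Ordinal bn) => //.
by rewrite mem_enum !inE rook_rel_coord; apply/andP.
Qed.

Definition covers (p : nat * nat -> nat) (s : seq (nat * nat)) (ls : seq nat) : bool :=
  all (fun l => has (fun x => p x == l) s) ls.

Definition self_dom (s : seq (nat * nat)) : bool :=
  all (fun x => 2 <= count (grid_adj x) s) s.

Lemma two_le_count (T : eqType) (P : pred T) (s : seq T) x y :
  x != y -> x \in s -> y \in s -> P x -> P y -> 2 <= count P s.
Proof.
move=> neq_xy xs ys Px Py; rewrite -size_filter.
apply: (@uniq_leq_size _ [:: x; y]) => [|z]; first by rewrite /= inE neq_xy.
by rewrite !inE mem_filter => /orP[] /eqP ->; rewrite ?Px ?Py.
Qed.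

Lemma grid_dom_of_covers m n s :
  covers fst s (iota 0 m) -> covers snd s (iota 0 n) -> self_dom s -> grid_dom m n s.
Proof.
move=> /allP rows /allP cols /allP dom_s.
apply/allP => a /rows /hasP[[a' b1] + /= /eqP eq_a]; rewrite eq_a => a_b1_s.
apply/allP => b /cols /hasP[[a1 b'] + /= /eqP eq_b]; rewrite eq_b => a1_b_s.
have [ab_s | abNs] := boolP ((a, b) \in s); first exact: dom_s.
have ne_b1 : b1 != b by apply: contraNneq abNs => <-.
have ne_a1 : a1 != a by apply: contraNneq abNs => <-.
apply: (two_le_count (x := (a, b1)) (y := (a1, b))) => //.
- by rewrite xpair_eqE negb_and eq_sym ne_a1.
- by rewrite /grid_adj /= eqxx eq_sym ne_b1.
- by rewrite /grid_adj /= eqxx eq_sym ne_a1 orbT.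
Qed.

Definition shift (d : nat) (x : nat * nat) : nat * nat := (d + x.1, d + x.2).

Lemma shift_inj d : injective (shift d).
Proof. by move=> [a b] [c e] [/addnI -> /addnI ->]. Qed.

Lemma grid_adj_shift d x y : grid_adj (shift d x) (shift d y) = grid_adj x y.
Proof. by rewrite /grid_adj /= !eqn_add2l. Qed.

Lemma self_dom_shift d s : self_dom (map (shift d) s) = self_dom s.
Proof.
rewrite /self_dom all_map; apply: eq_all => x /=.
by rewrite count_map; congr (_ <= _); apply: eq_count => y /=; rewrite grid_adj_shift.
Qed.

Lemma self_dom_cat s t : self_dom s -> self_dom t -> self_dom (s ++ t).
Proof.
move=> /allP dom_s /allP dom_t; apply/allP => x; rewrite mem_cat count_cat.
by case/orP => [/dom_s | /dom_t] le2; apply: leq_trans le2 _; rewrite ?leq_addr ?leq_addl.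
Qed.

Lemma covers_cat p s t ls1 ls2 :
  covers p s ls1 -> covers p t ls2 -> covers p (s ++ t) (ls1 ++ ls2).
Proof.
rewrite /covers all_cat => /allP cov_s /allP cov_t; apply/andP; split; apply/allP => l.
  by move/cov_s; rewrite has_cat => ->.
by move/cov_t; rewrite has_cat orbC => ->.
Qed.

Lemma covers_shift p d s ls : (forall x, p (shift d x) = d + p x) ->
  covers p (map (shift d) s) (map (addn d) ls) = covers p s ls.
Proof.
move=> p_shift; rewrite /covers all_map; apply: eq_all => l /=.
by rewrite has_map; apply: eq_has => x /=; rewrite p_shift eqn_add2l.
Qed.

Lemma in_grid_shift d m n s : in_grid m n s -> in_grid (d + m) (d + n) (map (shift d) s).
Proof. by rewrite /in_grid all_map; apply: sub_all => x /=; rewrite !ltn_add2l. Qed.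

Lemma in_grid_widen m n m' n' s :
  m <= m' -> n <= n' -> in_grid m n s -> in_grid m' n' s.
Proof.
move=> le_m le_n; apply: sub_all => x /andP[x1 x2].
by rewrite (leq_trans x1 le_m) (leq_trans x2 le_n).
Qed.

Lemma in_grid_shift_disjoint m n s t :
  in_grid m n s -> ~~ has (mem s) (map (shift m) t).
Proof.
move=> /allP grid_s; apply/hasPn => _ /mapP[y _ ->]; apply/negP.
by move=> /grid_s /andP[]; rewrite /= ltnNge leq_addr.
Qed.

Definition star_cover (n : nat) (s : seq (nat * nat)) : bool :=
  [&& uniq s, in_grid n n.+1 s, covers fst s (iota 0 n), covers snd s (iota 0 n.+1)
    & self_dom s].

Definition star_block : seq (nat * nat) :=
  [:: (0, 1); (1, 1); (2, 1); (3, 2); (3, 3); (3, 4)].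

Lemma star_cover_block n s :
  star_cover n s -> star_cover n.+4 (s ++ map (shift n) star_block).
Proof.
case/and5P => uniq_s grid_s rows_s cols_s dom_s.
have /and5P[uniq_b grid_b rows_b cols_b dom_b] : [&& uniq star_block,
    in_grid 4 5 star_block, covers fst star_block (iota 0 4),
    covers snd star_block (iota 1 4) & self_dom star_block] by [].
apply/and5P; split.
- by rewrite cat_uniq uniq_s (in_grid_shift_disjoint _ grid_s) (map_inj_uniq (@shift_inj n)).
- rewrite /in_grid all_cat; apply/andP; split.
    by apply: in_grid_widen grid_s; lia.
  by apply: in_grid_widen (in_grid_shift n grid_b); lia.
- rewrite -addn4 iotaD add0n.
  have -> : iota n 4 = map (addn n) (iota 0 4) by rewrite -iotaDl addn0.
  by apply: covers_cat; rewrite ?covers_shift.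
- rewrite -addn4 iotaD add0n.
  have -> : iota n.+1 4 = map (addn n) (iota 1 4) by rewrite -iotaDl addn1.
  by apply: covers_cat; rewrite ?covers_shift.
- by apply: self_dom_cat; rewrite ?self_dom_shift.
Qed.

Fixpoint stars (n : nat) : seq (nat * nat) :=
  match n with
  | 2 => [:: (0, 0); (0, 1); (1, 0); (1, 1)]
  | 3 => [:: (0, 0); (1, 0); (2, 0); (0, 1); (0, 2); (0, 3)]
  | 4 => [:: (0, 0); (1, 0); (2, 0); (3, 1); (3, 2); (3, 3); (3, 4)]
  | 5 => [:: (0, 0); (1, 0); (2, 0); (3, 0); (4, 1); (4, 2); (4, 3); (4, 4); (4, 5)]
  | 6 => [:: (0, 0); (1, 0); (2, 0); (3, 0); (4, 1); (4, 2); (4, 3); (5, 4); (5, 5); (5, 6)]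
  | m.+4 => stars m ++ map (shift m) star_block
  | _ => [::]
  end.

Lemma star_cover_stars n : 3 <= n -> star_cover n (stars n).
Proof.
elim/ltn_ind: n => -[|[|[|[|[|[|[|n]]]]]]] IH // _; [by [] .. |].
have cov : star_cover n.+3 (stars n.+3) by apply: IH; lia.
exact: star_cover_block cov.
Qed.

Lemma size_stars n : 2 <= n -> size (stars n) = (3 * n + 3) %/ 2.
Proof.
elim/ltn_ind: n => -[|[|[|[|[|[|[|n]]]]]]] IH // _; [by [] .. |].
have size_n : size (stars n.+3) = (3 * n.+3 + 3) %/ 2 by apply: IH; lia.
by rewrite [stars _]/= size_cat size_n /=; lia.
Qed.

Lemma stars_spec n : 2 <= n ->
  [&& uniq (stars n), in_grid n n.+1 (stars n) & grid_dom n n.+1 (stars n)].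
Proof.
case: n => [|[|[|n]]] // _.
have /and5P[uniq_s grid_s rows cols dom] := star_cover_stars (isT : 2 < n.+3).
by rewrite uniq_s grid_s (grid_dom_of_covers rows cols dom).
Qed.

Theorem theorem14 (n : nat) (hn : 2 <= n) :
  gamma2t (cart_rel (@complete_rel n) (@complete_rel n.+1)) =
  (if odd n then (3 * n + 3) %/ 2 else (3 * n + 2) %/ 2).
Proof.
have -> : (if odd n then (3 * n + 3) %/ 2 else (3 * n + 2) %/ 2) = (3 * n + 3) %/ 2.
  by case: ifP => odd_n; lia.
apply/eqP; rewrite eqn_leq; apply/andP; split.
  have /and3P[uniq_s grid_s dom_s] := stars_spec hn.
  apply: leq_trans (gamma2t_le_card (total2dom_grid_set uniq_s grid_s dom_s)) _.
  by rewrite -(size_stars hn) card_grid_set.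
apply: leq_gamma2t => [|S domS]; first by rewrite card_prod !card_ord; nia.
(* the two occurrences of #|S| differ in hidden coercions, so lia gets one atom *)
by case: (rook_total2dom_card_ge domS); rewrite !card_ord; move: #|S| => k bound; lia.
Qed.
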